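(* The upper bound $\mathcal{S}(T,d)\in O(\sigma n)$ (valid for every string $T$ of length $n>d$ over an alphabet of size $\sigma$) is tight when $\sigma\le d$ and $n-d\in\Omega(n)$: for every constant $\gamma\in(0,1)$ there is a constant $c>0$ such that for all integers $\sigma\ge 2$, $d$, $n$ with $\sigma\le d<n$ and $n-d\ge\gamma n$, there exists a string $T'$ of length $n$ over an alphabet of size $\sigma$ with $\mathcal{S}(T',d)\ge c\,\sigma n$.
   Context: For a string $S$ over alphabet $\Sigma$, a string $w\in\Sigma^*$ is a minimal absent word (MAW) of $S$ if $w$ does not occur in $S$ but every proper substring of $w$ (including the empty string) occurs in $S$; $\mathsf{MAW}(S)$ is the set of all MAWs of $S$. $T[a..b]$ denotes the substring of $T$ from position $a$ to $b$. For a string $T$ of length $n>d$, $\mathcal{S}(T,d)=\sum_{i=1}^{n-d}|\mathsf{MAW}(T[i..i+d-1])\bigtriangleup\mathsf{MAW}(T[i+1..i+d])|$, where $\bigtriangleup$ is symmetric difference. *)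

From mathcomp Require Import all_boot all_order all_algebra.
From mathcomp Require Import reals.
Set Implicit Arguments. Unset Strict Implicit. Unset Printing Implicit Defensive.

Definition substrings {A : eqType} (w : seq A) : seq (seq A) :=
  [seq take j (drop i w) | i <- iota 0 (size w).+1, j <- iota 0 (size w - i).+1].

Definition is_MAW {A : eqType} (S w : seq A) : bool :=
  ~~ infix w S && all (fun u => (u != w) ==> infix u S) (substrings w).

(* |MAW(S1) Δ MAW(S2)| for strings S1, S2 of length d: a MAW of a string of
   length d has length at most d+1 (a MAW w with |w| >= 2 has w[2..] occurring
   in the string), so it suffices to count words of length k <= d+1. *)
Definition maw_symdiff {sigma : nat} (d : nat) (S1 S2 : seq 'I_sigma) : nat :=
  \sum_(k < d.+2)
    #|[set w : k.-tuple 'I_sigma | is_MAW S1 w (+) is_MAW S2 w]|.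

(* T[a..b] (1-indexed): the window of length d starting at position i is
   take d (drop (i-1) T). *)
Definition window {A : Type} (T : seq A) (i d : nat) : seq A :=
  take d (drop i.-1 T).

Definition Sdiff {sigma : nat} (T : seq 'I_sigma) (d : nat) : nat :=
  \sum_(1 <= i < (size T - d).+1)
    maw_symdiff d (window T i d) (window T i.+1 d).

(* Two families of strings attain the bound.  For sigma <= 3 take alternating
   blocks a^d b^d: when the window slides by one, the run x^r of the letter it
   is leaving becomes absent while x^(r-1) stays present, so x^r is a new MAW
   and every shift contributes at least 1.
   For sigma >= 4 take 0^m c_0 0^m c_1 0^m c_2 ..., with the marks c_i cycling
   through the sigma - 1 nonzero letters and m = d / (sigma - 1), so that no
   mark repeats inside a window.  If the window at p starts with 0^s c and c'
   is one of its later marks, then c' 0^s c is a MAW of that window (c' is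
   followed by m >= s zeros, and c occurs only once) but not of the next one,
   which has lost the prefix 0^s c.  A window holds about sigma / 2 such marks,
   so every shift contributes at least sigma / 8, and
   S(T,d) >= sigma (n - d) / 8 >= (gamma / 8) sigma n. *)

From mathcomp Require Import all_boot all_order all_algebra.
From mathcomp Require Import reals.
From mathcomp Require Import zify lra.
Set Implicit Arguments. Unset Strict Implicit. Unset Printing Implicit Defensive.

Section Factors.
Variables (A : eqType) (f : nat -> A).

Definition factor (p l : nat) : seq A := map f (iota p l).

Lemma size_factor p l : size (factor p l) = l.
Proof. by rewrite size_map size_iota. Qed.

Lemma nth_factor x0 p l j : j < l -> nth x0 (factor p l) j = f (p + j).
Proof. by move=> jl; rewrite (nth_map 0) ?nth_iota ?size_iota. Qed.

Lemma factor_rcons p l : factor p l.+1 = rcons (factor p l) (f (p + l)).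
Proof. by rewrite /factor -addn1 iotaD map_cat cats1. Qed.

Lemma take_drop_factor o l p n :
  take l (drop o (factor p n)) = factor (p + o) (minn l (n - o)).
Proof. by rewrite -map_drop -map_take drop_iota take_iota. Qed.

Lemma infix_factor o l p n : o + l <= n -> infix (factor (p + o) l) (factor p n).
Proof.
move=> oln; have <- : minn l (n - o) = l by lia.
rewrite -take_drop_factor.
exact: infix_trans (infix_take _ _) (infix_drop _ _).
Qed.

Lemma infix_factor_prefix l p n : l <= n -> infix (factor p l) (factor p n).
Proof. by move=> ln; rewrite -[p in factor p l]addn0 infix_factor. Qed.

Lemma infix_factorP u p n :
  infix u (factor p n) -> exists2 o, o + size u <= n & u = factor (p + o) (size u).
Proof.
case/infixP=> s [s' eq_n].
have size_n : size s + size u + size s' = n.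
  by rewrite -(size_factor p n) eq_n !size_cat addnA.
exists (size s); first by lia.
have := take_drop_factor (size s) (size u) p n.
rewrite eq_n drop_size_cat // take_size_cat // => {1}->.
by congr factor; lia.
Qed.

Lemma factor_nseq x p l : (forall j, j < l -> f (p + j) = x) -> factor p l = nseq l x.
Proof.
move=> fx; apply: (@eq_from_nth _ x); first by rewrite size_factor size_nseq.
by move=> j; rewrite size_factor => jl; rewrite nth_factor // nth_nseq jl fx.
Qed.

Lemma window_mkseq n i d : i.-1 + d <= n -> window (mkseq f n) i d = factor i.-1 d.
Proof. by move=> idn; rewrite /window take_drop_factor add0n; congr factor; lia. Qed.

End Factors.

Section MinimalAbsentWords.
Variable A : eqType.
Implicit Types S u w : seq A.

Lemma mem_substrings w i j : i + j <= size w -> take j (drop i w) \in substrings w.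
Proof. by move=> ijw; apply/allpairsPdep; exists i, j; rewrite !mem_iota; split=> //; lia. Qed.

Lemma substrings_proper u w : u \in substrings w -> u != w ->
  infix u (behead w) || infix u (take (size w).-1 w).
Proof.
case/allpairsPdep=> i [j [+ + ->]]; rewrite !mem_iota => _ jw.
case: i jw => [|i] jw uw; last first.
  rewrite -addn1 -drop_drop drop1.
  by rewrite (infix_trans (infix_take _ _) (infix_drop _ _)).
have jw' : j <= (size w).-1.
  by apply: contraLR uw; rewrite drop0 negbK => ?; rewrite take_oversize //; lia.
by rewrite drop0 -(take_takel _ jw') infix_take orbT.
Qed.

Lemma is_MAWE S w :
  is_MAW S w = [&& ~~ infix w S, infix (behead w) S & infix (take (size w).-1 w) S].
Proof.
rewrite /is_MAW; case: (infix w S) => //; rewrite !andTb.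
apply/allP/andP => [sub_inf | [bS tS] u /substrings_proper uP].
  case: w sub_inf => [|x v] sub_inf; first by rewrite infix0s.
  have proper_inf u : size u <= size v -> u \in substrings (x :: v) -> infix u S.
    move=> uv /sub_inf/implyP; apply; apply: contraTneq uv => ->; by rewrite /= ltnn.
  split; apply: proper_inf.
  - by [].
  - by have := @mem_substrings (x :: v) 1 (size v); rewrite drop1 take_size; apply.
  - by rewrite size_take /=; case: ltnP.
  - exact: (@mem_substrings (x :: v) 0 (size v)).
apply/implyP => /uP/orP [] /infix_trans; by apply.
Qed.
End MinimalAbsentWords.

Section Counting.
Variables (sigma d : nat).

Lemma maw_symdiff_ge_family (S1 S2 : seq 'I_sigma) k q (W : 'I_q -> seq 'I_sigma) :
  k <= d.+1 -> injective W -> (forall i, size (W i) = k) ->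
  (forall i, is_MAW S1 (W i) (+) is_MAW S2 (W i)) -> q <= maw_symdiff d S1 S2.
Proof.
move=> kd W_inj sizeW W_diff.
pose Wt i : k.-tuple 'I_sigma := Tuple (introT eqP (sizeW i)).
have Wt_inj : injective Wt by move=> i j /(congr1 val) /W_inj.
rewrite /maw_symdiff (bigD1 (Ordinal (kd : k < d.+2))) //= -[q]card_ord.
apply: leq_trans (leq_addr _ _).
rewrite -(card_imset _ Wt_inj); apply: subset_leq_card.
by apply/subsetP=> _ /imsetP [i _ ->]; rewrite inE W_diff.
Qed.

Lemma Sdiff_mkseq_ge (f : nat -> 'I_sigma) n q :
  (forall p, q <= maw_symdiff d (factor f p d) (factor f p.+1 d)) ->
  (n - d) * q <= Sdiff (mkseq f n) d.
Proof.
move=> f_diff; rewrite /Sdiff size_mkseq.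
have -> : (n - d) * q = \sum_(1 <= i < (n - d).+1) q.
  by rewrite sum_nat_const_nat subn1.
rewrite big_nat_cond [leqRHS]big_nat_cond; apply: leq_sum => -[// | i] /andP [i_le _].
by rewrite !window_mkseq //=; lia.
Qed.
End Counting.

Section AlternatingBlocks.
Variables (A : eqType) (a b : A) (d : nat).
Hypotheses (a_neq_b : a != b) (d_gt0 : 0 < d).

Definition blocks (y : nat) : A := if odd (y %/ d) then b else a.

Lemma blocks_block B t : t < d -> blocks (B * d + t) = if odd B then b else a.
Proof. by move=> td; rewrite /blocks divnMDl // divn_small ?addn0. Qed.

Lemma blocks_run p j : j < d - p %% d -> blocks (p + j) = blocks p.
Proof.
move=> jr; rewrite {1 2}(divn_eq p d) -addnA !blocks_block ?ltn_mod //; lia.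
Qed.

Lemma blocks_switch p j : d - p %% d <= j <= d -> blocks (p + j) != blocks p.
Proof.
move=> jr; have pd := ltn_pmod p d_gt0.
have -> : p + j = (p %/ d).+1 * d + (p %% d + j - d).
  by rewrite {1}(divn_eq p d) mulSn; lia.
have rest_lt : p %% d + j - d < d by lia.
rewrite {3}(divn_eq p d) !blocks_block //.
by rewrite /=; case: (odd _) => /=; rewrite // eq_sym.
Qed.

Lemma blocks_gained_MAW p (w := nseq (d - p %% d) (blocks p)) :
  is_MAW (factor blocks p.+1 d) w && ~~ is_MAW (factor blocks p d) w.
Proof.
have pd := ltn_pmod p d_gt0; set r := d - p %% d in w *.
have run l : l <= r -> factor blocks p l = nseq l (blocks p).
  by move=> lr; apply: factor_nseq => j jl; apply: blocks_run; lia.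
have run' : factor blocks p.+1 r.-1 = nseq r.-1 (blocks p).
  by apply: factor_nseq => j jl; rewrite addSnnS blocks_run //; lia.
rewrite !is_MAWE /w size_nseq take_nseq ?leq_pred // -drop1 drop_nseq subn1 -run'.
have -> /= : infix w (factor blocks p d).
  by rewrite /w -run // infix_factor_prefix //; lia.
rewrite andbT infix_factor_prefix ?andbT; last by lia.
apply/negP => /infix_factorP [o]; rewrite size_nseq => o_le w_eq.
have := congr1 (nth (blocks p) ^~ r.-1) w_eq.
rewrite nth_nseq if_same nth_factor; last by lia.
have -> : p.+1 + o + r.-1 = p + (o + r) by lia.
by move/eqP; apply/negP; rewrite eq_sym blocks_switch //; lia.
Qed.
End AlternatingBlocks.

Section SparseMarks.
Variables (A : eqType) (z : A) (c : nat -> A) (k m d : nat).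
Hypotheses (c_neq_z : forall i, c i != z) (c_eq_mod : forall i j, c i = c j -> i = j %[mod k]).
Hypothesis window_short : d < m.+1 * k.

Definition sparse (y : nat) : A := if y %% m.+1 == m then c (y %/ m.+1) else z.

Lemma sparse_block B t : t <= m -> sparse (B * m.+1 + t) = if t == m then c B else z.
Proof. by move=> tm; rewrite /sparse modnMDl divnMDl // modn_small // divn_small ?addn0. Qed.

Lemma sparse_markP y : sparse y != z -> y = y %/ m.+1 * m.+1 + m /\ sparse y = c (y %/ m.+1).
Proof.
rewrite /sparse; case: ifP => [/eqP mod_y _ | _]; last by rewrite eqxx.
by split; first by rewrite {1}(divn_eq y m.+1) mod_y.
Qed.

Lemma sparse_mark_far y y' : sparse y != z -> sparse y = sparse y' -> y < y' ->
  m.+1 * k <= y' - y.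
Proof.
move=> yz eq_yy'; have y'z : sparse y' != z by rewrite -eq_yy'.
have [def_y eq_y] := sparse_markP yz; have [def_y' eq_y'] := sparse_markP y'z.
move: eq_yy'; rewrite eq_y eq_y' => /c_eq_mod/eqP; set B := y %/ _; set B' := y' %/ _.
rewrite def_y def_y' ltn_add2r ltn_mul2r /= => eq_BB' lt_BB'.
have : k <= B' - B by apply: dvdn_leq; rewrite ?subn_gt0 // -eqn_mod_dvd 1?eq_sym // ltnW.
rewrite -(leq_pmul2l (ltn0Sn m)); nia.
Qed.

Lemma sparse_mark_notinfix v p y : sparse y != z -> p <= y.+1 -> y < p + size v ->
  ~~ infix (rcons v (sparse y)) (factor sparse p d).
Proof.
move=> yz py yv; apply/negP => /infix_factorP [o]; rewrite size_rcons => o_le.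
rewrite factor_rcons => /rcons_inj [_ /sparse_mark_far far].
have := far yz; lia.
Qed.

Definition gap p := m - p %% m.+1.

Lemma gap_le p : gap p <= m.
Proof. exact: leq_subr. Qed.

Lemma sparse_next_mark p i : sparse (p + gap p + i * m.+1) = c (p %/ m.+1 + i).
Proof.
have pm := ltn_pmod p (ltn0Sn m).
have -> : p + gap p + i * m.+1 = (p %/ m.+1 + i) * m.+1 + m.
  by rewrite /gap {1}(divn_eq p m.+1); lia.
by rewrite sparse_block ?eqxx.
Qed.

Lemma sparse_before_mark p j : j < gap p -> sparse (p + j) = z.
Proof.
move=> jg; rewrite {1}(divn_eq p m.+1) -addnA sparse_block; last by rewrite /gap in jg; lia.
by case: eqP => //; rewrite /gap in jg; lia.
Qed.

Lemma sparse_after_mark p i j : j < m -> sparse (p + gap p + i * m.+1 + j.+1) = z.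
Proof.
move=> jm; have pm := ltn_pmod p (ltn0Sn m).
have -> : p + gap p + i * m.+1 + j.+1 = (p %/ m.+1 + i).+1 * m.+1 + j.
  by rewrite /gap {1}(divn_eq p m.+1); lia.
by rewrite sparse_block ?(ltn_eqF jm) // ltnW.
Qed.

(* The word c' 0^s c of the header, c' being the i-th mark after c. *)
Definition lost_maw p i : seq A :=
  rcons (sparse (p + gap p + i * m.+1) :: factor sparse p (gap p)) (sparse (p + gap p)).

Lemma size_lost_maw p i : size (lost_maw p i) = (gap p).+2.
Proof. by rewrite size_rcons /= size_factor. Qed.

Lemma lost_maw_MAW p i : i.+2 * m.+1 <= d.+1 ->
  is_MAW (factor sparse p d) (lost_maw p i) && ~~ is_MAW (factor sparse p.+1 d) (lost_maw p i).
Proof.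
move=> id; have gm := gap_le p; set s := gap p in gm *; set x := p + s + i * m.+1.
have mark_s : sparse (p + s) != z.
  by have := sparse_next_mark p 0; rewrite mul0n addn0 => ->.
have mark_x : sparse x != z by rewrite sparse_next_mark.
have zeros : factor sparse p s = factor sparse x.+1 s.
  rewrite (factor_nseq (x := z) (@sparse_before_mark p)).
  by rewrite (factor_nseq (x := z)) // => j js; rewrite addSnnS sparse_after_mark //; lia.
have not_in_p : ~~ infix (lost_maw p i) (factor sparse p d).
  by apply: sparse_mark_notinfix; rewrite //= ?size_factor; lia.
have behead_in_p : infix (rcons (factor sparse p s) (sparse (p + s))) (factor sparse p d).
  by rewrite -factor_rcons infix_factor_prefix //; lia.
have behead_notin_p1 :
    ~~ infix (rcons (factor sparse p s) (sparse (p + s))) (factor sparse p.+1 d).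
  by apply: sparse_mark_notinfix; rewrite ?size_factor //; lia.
have belast_in_p : infix (sparse x :: factor sparse p s) (factor sparse p d).
  rewrite zeros (_ : sparse x :: _ = factor sparse x s.+1) // /x -addnA.
  by rewrite infix_factor //; lia.
rewrite !is_MAWE.
have -> : behead (lost_maw p i) = rcons (factor sparse p s) (sparse (p + s)) by [].
have -> : take (size (lost_maw p i)).-1 (lost_maw p i) = sparse x :: factor sparse p s.
  by rewrite size_lost_maw /lost_maw -cats1 take_size_cat // /= size_factor.
by rewrite not_in_p behead_in_p belast_in_p (negbTE behead_notin_p1) andbF.
Qed.

Lemma lost_maw_inj p i j : i.+2 * m.+1 <= d.+1 -> j.+2 * m.+1 <= d.+1 ->
  lost_maw p i = lost_maw p j -> i = j.
Proof.
have marks_differ i' j' : i' < j' -> j'.+2 * m.+1 <= d.+1 ->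
    sparse (p + gap p + i' * m.+1) != sparse (p + gap p + j' * m.+1).
  move=> ij' jd; apply/eqP => /sparse_mark_far far.
  have := far (_ : _ != z) (_ : _ < _); rewrite sparse_next_mark ltn_add2l ltn_mul2r /=.
  move=> /(_ (c_neq_z _) ij'); nia.
move=> id jd /(congr1 (head z)) /= eq_head.
have [ij | ji | //] := ltngtP i j.
  by have := marks_differ _ _ ij jd; rewrite eq_head eqxx.
by have := marks_differ _ _ ji id; rewrite eq_head eqxx.
Qed.
End SparseMarks.

Lemma mark_count_lower_bound sg d : 3 <= sg < d -> sg.+1 <= 8 * (d.+1 %/ (d %/ sg).+1 - 1).
Proof.
case/andP=> sg3 sg_d; set m := d %/ sg; set X := d.+1 %/ m.+1.
have m_sg : m * sg <= d := leq_divM d sg.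
have m_pos : 0 < m by rewrite divn_gt0; lia.
have X_ceil : d.+1 < X.+1 * m.+1 := ltn_ceil d.+1 (ltn0Sn m).
have X_ge2 : 2 <= X by rewrite leq_divRL //; nia.
nia.
Qed.

Lemma Sdiff_blocks sigma (a b : 'I_sigma) d n : a != b -> 0 < d ->
  n - d <= Sdiff (mkseq (blocks a b d) n) d.
Proof.
move=> a_neq_b d_gt0; rewrite -[n - d]muln1; apply: Sdiff_mkseq_ge => p.
have /andP [gained not_lost] := blocks_gained_MAW a_neq_b d_gt0 p.
apply: (maw_symdiff_ge_family (k := d - p %% d)
          (W := fun _ : 'I_1 => nseq (d - p %% d) (blocks a b d p))).
- by rewrite leqW ?leq_subr.
- by move=> i j _; rewrite !ord1.
- by move=> _; rewrite size_nseq.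
- by move=> _; rewrite addbC gained (negbTE not_lost).
Qed.

Lemma Sdiff_sparse sigma (z : 'I_sigma) c k m d n :
  (forall i, c i != z) -> (forall i j, c i = c j -> i = j %[mod k]) ->
  d < m.+1 * k -> m < d ->
  (n - d) * (d.+1 %/ m.+1 - 1) <= Sdiff (mkseq (sparse z c m) n) d.
Proof.
move=> c_neq_z c_eq_mod window_short m_lt_d; apply: Sdiff_mkseq_ge => p.
have fits (i : 'I_(d.+1 %/ m.+1 - 1)) : i.+2 * m.+1 <= d.+1.
  apply: leq_trans (leq_divM d.+1 m.+1); rewrite leq_mul2r; have := ltn_ord i; lia.
apply: (maw_symdiff_ge_family (k := (gap m p).+2) (W := fun i => lost_maw z c m p i)).
- by have := gap_le m p; lia.
- by move=> i j /(lost_maw_inj c_neq_z c_eq_mod window_short (fits i) (fits j))/val_inj.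
- by move=> i; rewrite size_lost_maw.
- move=> i; have := lost_maw_MAW c_neq_z c_eq_mod window_short p (fits i).
  by case/andP=> -> /negbTE ->.
Qed.

Lemma Sdiff_lower_bound sigma d n : 2 <= sigma -> sigma <= d ->
  exists T : seq 'I_sigma, size T = n /\ sigma * (n - d) <= 8 * Sdiff T d.
Proof.
case: sigma => [// | sg] sg_gt0 sg_d; have d_gt0 : 0 < d by lia.
have [small | large] := leqP sg 2.
  exists (mkseq (blocks ord0 (inord 1) d) n); split; first exact: size_mkseq.
  have a_neq_b : (ord0 : 'I_sg.+1) != inord 1.
    by apply/eqP => /(congr1 val); rewrite /= inordK.
  have := Sdiff_blocks n a_neq_b d_gt0; nia.
pose c i : 'I_sg.+1 := inord (i %% sg).+1.
have c_val i : nat_of_ord (c i) = (i %% sg).+1 by rewrite inordK // ltnS ltn_pmod.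
have c_neq0 i : c i != ord0 by apply/eqP => /(congr1 (@nat_of_ord _)); rewrite c_val.
have c_eq_mod i j : c i = c j -> i = j %[mod sg].
  by move=> /(congr1 (@nat_of_ord _)); rewrite !c_val => -[].
exists (mkseq (sparse ord0 c (d %/ sg)) n); split; first exact: size_mkseq.
have := Sdiff_sparse n c_neq0 c_eq_mod (ltn_ceil d sg_gt0) (ltn_Pdiv (ltnW large) d_gt0).
have : sg.+1 <= 8 * (d.+1 %/ (d %/ sg).+1 - 1) by apply: mark_count_lower_bound; lia.
nia.
Qed.

Import GRing.Theory Num.Theory.
Local Open Scope ring_scope.

Theorem lemma15 (R : realType) (gamma : R) :
  0 < gamma -> gamma < 1 ->
  exists c : R, 0 < c /\
    forall (sigma d n : nat),
      (2 <= sigma)%N -> (sigma <= d)%N -> (d < n)%N ->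
      gamma * n%:R <= (n - d)%:R ->
      exists T' : seq 'I_sigma, size T' = n /\
        c * sigma%:R * n%:R <= (Sdiff T' d)%:R.
Proof.
move=> gamma_gt0 _; exists (gamma / 8); split; first by rewrite divr_gt0.
move=> sigma d n sigma2 sigma_d _ gamma_n.
have [T [size_T T_bound]] := Sdiff_lower_bound n sigma2 sigma_d.
exists T; split => //.
move: T_bound; rewrite -(ler_nat R) !natrM.
have : 0 <= sigma%:R :> R by [].
nra.
Qed.
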